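(* There is a deterministic sorting algorithm in the rank query model that runs in $k$ rounds and asks a total of $O(k\,n^{1+1/k})$ queries on every input of $n$ elements.
   Context: Rank query model: items $x_1,\ldots,x_n$ whose ranks form an unknown permutation of $\{1,\ldots,n\}$; a query asks ''How is $\mathrm{rank}(x_i)$ compared to $m$?'' with answer ''$<$'', ''$=$'' or ''$>$''; sorting means determining all ranks. An algorithm runs in $k$ rounds if in each of $k$ rounds it submits a set of queries chosen depending only on answers of earlier rounds, then receives all answers. *)

From mathcomp Require Import all_boot fingroup perm.
From Stdlib Require Import Reals.

Set Implicit Arguments.
Unset Strict Implicit.
Unset Printing Implicit Defensive.

(* Items are indexed by 'I_n; the (unknown) input is a permutation s of 'I_n,
   the rank of item x_i being (s i).+1 in {1,...,n}. *)

Definition query (n : nat) := ('I_n * nat)%type.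

Definition answer (n : nat) (s : {perm 'I_n}) (q : query n) : comparison :=
  Nat.compare (s q.1).+1 q.2.

Definition transcript (n : nat) := seq (query n * comparison).

(* A deterministic round-based algorithm: the query set of round r is a
   function of (r and) the answers received in earlier rounds; the output
   (the claimed rank of every item) is a function of all answers. *)
Record algorithm (n : nat) := Algorithm {
  alg_queries : nat -> transcript n -> seq (query n);
  alg_output  : transcript n -> 'I_n -> nat
}.

Fixpoint run (n : nat) (A : algorithm n) (s : {perm 'I_n}) (r : nat)
  : transcript n :=
  match r with
  | 0 => [::]
  | r'.+1 =>
      let h := run A s r' in
      h ++ [seq (q, answer s q) | q <- alg_queries A r' h]
  end.

Definition sorts_in (n k : nat) (A : algorithm n) : Prop :=
  forall (s : {perm 'I_n}) (i : 'I_n), alg_output A (run A s k) i = (s i).+1.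

Definition num_queries (n k : nat) (A : algorithm n) (s : {perm 'I_n}) : nat :=
  size (run A s k).

(** Run a B-ary search for the rank of every item in parallel, with
    B = ⌈n^(1/k)⌉.  Before round j each rank is known to lie in an interval
    [l, l + B^(k-j)); asking whether it is below l + d B^(k-j-1) for
    d = 1, ..., B-1 shrinks the interval by a factor B.  After k rounds the
    interval is a single point, and the k rounds cost k n (B-1) <= k n^(1+1/k)
    queries since (B-1)^k < n. *)

From mathcomp Require Import all_boot fingroup perm.
From Stdlib Require Import Reals.
From mathcomp Require Import zify.
From Stdlib Require Import Lia.

Set Implicit Arguments.
Unset Strict Implicit.
Local Open Scope nat_scope.
Local Notation "m ^ n" := (expn m n) : nat_scope.

Lemma exists_digit l r B S :
  l <= r < l + B * S -> exists2 d, d < B & l + d * S <= r < l + d * S + S.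
Proof.
move=> /andP [le_lr lt_rlBS].
have S_gt0 : 0 < S by rewrite lt0n; apply/eqP=> S0; rewrite S0 muln0 in lt_rlBS; lia.
exists ((r - l) %/ S).
- by rewrite ltn_divLR // mulnC; lia.
- have := divn_eq (r - l) S; have := ltn_pmod (r - l) S_gt0; lia.
Qed.

Lemma exists_ceil_root n k : 0 < k -> 0 < n -> exists B, n <= B ^ k /\ B.-1 ^ k < n.
Proof.
move=> k_gt0 n_gt0.
have [|B le_nBk minB] := ex_minnP (ex_intro (fun b => n <= b ^ k) n _).
  by rewrite -{1}(expn1 n) leq_pexp2l.
exists B; split => //; case: B le_nBk minB => [|B] _ minB /=; first by rewrite exp0n.
by rewrite ltnNge; apply/negP=> /minB; lia.
Qed.

Definition rank_ge (c : comparison) : bool := if c is Lt then false else true.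

Lemma rank_ge_answer n (s : {perm 'I_n}) (q : query n) :
  rank_ge (answer s q) = (q.2 <= (s q.1).+1).
Proof.
by rewrite /answer; case: Nat.compare_spec => cmp /=; apply/esym; [|apply/negbTE|]; lia.
Qed.

Definition lower_bound n (h : transcript n) (i : 'I_n) : nat :=
  maxn 1 (\max_(e <- h | (e.1.1 == i) && rank_ge e.2) e.1.2).

Lemma lower_bound_cat n (h t : transcript n) i :
  lower_bound (h ++ t) i =
  maxn (lower_bound h i) (\max_(e <- t | (e.1.1 == i) && rank_ge e.2) e.1.2).
Proof. by rewrite /lower_bound big_cat maxnA. Qed.

Definition bary_queries n B S (h : transcript n) : seq (query n) :=
  [seq (i, lower_bound h i + d * S) | i <- enum 'I_n, d <- iota 1 B.-1].

Definition bary_search n k B : algorithm n :=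
  Algorithm (fun j h => bary_queries B (B ^ (k - j.+1)) h) (@lower_bound n).

Lemma size_run_bary_search n k B (s : {perm 'I_n}) j :
  size (run (bary_search n k B) s j) = j * (n * B.-1).
Proof.
elim: j => //= j IHj.
by rewrite size_cat size_map size_allpairs size_enum_ord size_iota IHj mulSn addnC.
Qed.

Lemma lower_bound_refine n B S (s : {perm 'I_n}) (h : transcript n) i :
  lower_bound h i <= (s i).+1 < lower_bound h i + B * S ->
  let h' := h ++ [seq (q, answer s q) | q <- bary_queries B S h] in
  lower_bound h' i <= (s i).+1 < lower_bound h' i + S.
Proof.
move=> bounds; have /andP [le_lr _] := bounds.
have [d lt_dB /andP [le_probe_r lt_r_probe]] := exists_digit bounds.
rewrite /= lower_bound_cat big_map.
set l := lower_bound h i in le_lr le_probe_r lt_r_probe *.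
set M := \max_(q <- _ | _) _.
have le_Mr : M <= (s i).+1.
  by apply/bigmax_leqP_seq => q _ /= /andP [/eqP <-]; rewrite rank_ge_answer.
have le_probe_M : 0 < d -> l + d * S <= M.
  move=> d_gt0; apply: (leq_bigmax_seq (i, l + d * S)).
    apply: (allpairs_f (fun i d => (i, lower_bound h i + d * S))).
    - by rewrite mem_enum.
    - by rewrite mem_iota; lia.
  by rewrite /= eqxx rank_ge_answer.
by case: (posnP d) => [d0|/le_probe_M]; move: lt_r_probe; rewrite ?d0; lia.
Qed.

Lemma bary_search_invariant n k B (s : {perm 'I_n}) i j : n <= B ^ k -> j <= k ->
  let l := lower_bound (run (bary_search n k B) s j) i in
  l <= (s i).+1 < l + B ^ (k - j).
Proof.
move=> le_nBk; elim: j => [_|j IHj lt_jk] /=.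
  by rewrite /lower_bound big_nil subn0; have := ltn_ord (s i); lia.
apply: lower_bound_refine; rewrite -expnS -subSn //; exact: IHj (ltnW lt_jk).
Qed.

Lemma bary_search_sorts n k B : n <= B ^ k -> sorts_in k (bary_search n k B).
Proof.
move=> le_nBk s i; have := bary_search_invariant s i le_nBk (leqnn k).
by rewrite /= subnn expn0 addn1 ltnS -eqn_leq => /eqP.
Qed.

Lemma INR_expn b k : INR (b ^ k) = (INR b ^ k)%R.
Proof. by elim: k => [|k IHk] //=; rewrite expnS mult_INR IHk. Qed.

Lemma INR_le_Rpower_inv n k b : 0 < k -> b ^ k <= n ->
  (INR b <= Rpower (INR n) (/ INR k))%R.
Proof.
move=> k_gt0 le_bkn.
have k_pos : (0 < INR k)%R by apply: lt_0_INR; apply/ltP.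
case: (posnP b) => [->|b_gt0]; first exact/Rlt_le/exp_pos.
have b_pos : (0 < INR b)%R by apply: lt_0_INR; apply/ltP.
rewrite -[INR b](Rpower_1 _ b_pos) -(Rinv_r (INR k)); last exact: Rgt_not_eq.
rewrite -Rpower_mult; apply: Rle_Rpower_l; first exact/Rlt_le/Rinv_0_lt_compat.
rewrite (Rpower_pow k _ b_pos); split; first exact: pow_lt b_pos.
by rewrite -INR_expn; apply/le_INR/leP.
Qed.

Theorem proposition16 :
  exists C : R, forall k n : nat, (1 <= k)%N -> (1 <= n)%N ->
    exists A : algorithm n,
      sorts_in k A /\
      forall s : {perm 'I_n},
        (INR (num_queries k A s) <= C * INR k * Rpower (INR n) (1 + / INR k))%R.
Proof.
exists 1%R => k n k_gt0 n_gt0.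
have [B [le_nBk lt_Bk_n]] := exists_ceil_root k_gt0 n_gt0.
exists (bary_search n k B); split; first exact: bary_search_sorts.
move=> s; rewrite /num_queries size_run_bary_search !mult_INR Rmult_1_l.
have n_pos : (0 < INR n)%R by apply: lt_0_INR; apply/ltP.
rewrite Rpower_plus Rpower_1 //.
do 2 (apply: Rmult_le_compat_l; first exact: pos_INR).
exact/INR_le_Rpower_inv/ltnW.
Qed.
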